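(* Let $\mathcal{H}$ be a complex Hilbert space, $A\in\mathcal{B}(\mathcal{H})$ positive, $S\in\mathcal{B}_A(\mathcal{H})$, and let $m_A(S)=\inf_{\|z\|_A=1}\|Sz\|_A$. Then $$d\omega_A^2(S)\ge\max\left\{\left(1+m_A^2(S)\right)\omega_A^2(S),\ \left(1+\|S\|_A^2\right)c_A^2(S)\right\}.$$
   Context: $\mathcal{B}(\mathcal{H})$ denotes the bounded linear operators on $\mathcal{H}$. For positive $A$, $\langle x,z\rangle_A=\langle Ax,z\rangle$ and $\|z\|_A=\|A^{1/2}z\|$. $\mathcal{B}_A(\mathcal{H})$ is the set of $S\in\mathcal{B}(\mathcal{H})$ for which some $R\in\mathcal{B}(\mathcal{H})$ satisfies $AR=S^*A$. For operators $T$ bounded with respect to $\|\cdot\|_A$: $\|T\|_A=\sup_{\|z\|_A=1}\|Tz\|_A$, $\omega_A(T)=\sup_{\|z\|_A=1}|\langle Tz,z\rangle_A|$, $c_A(T)=\inf_{\|z\|_A=1}|\langle Tz,z\rangle_A|$, and $d\omega_A(T)=\sup_{\|z\|_A=1}(|\langle Tz,z\rangle_A|^2+\|Tz\|_A^4)^{1/2}$. *)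

From HB Require Import structures.
From mathcomp Require Import all_boot all_order all_algebra.
From mathcomp Require Import complex.
From mathcomp Require Import boolp classical_sets reals.
Set Implicit Arguments. Unset Strict Implicit. Unset Printing Implicit Defensive.
Import Order.TTheory GRing.Theory Num.Theory.
Local Open Scope classical_set_scope.
Local Open Scope ring_scope.

Section Hilbert.
Variable R : realType.
Local Notation C := (complex R).
Variable V : lmodType C.

Definition is_inner_product (ip : V -> V -> C) : Prop :=
  [/\ (forall (a : C) (x y z : V), ip (a *: x + y) z = a * ip x z + ip y z),
      (forall x y : V, ip y x = Num.conj (ip x y)),
      (forall x : V, 0 <= ip x x) &
      (forall x : V, ip x x = 0 -> x = 0)].

Definition ipnorm (ip : V -> V -> C) (x : V) : R :=
  Num.sqrt (complex.Re (ip x x)).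

Definition ip_complete (ip : V -> V -> C) : Prop :=
  forall u : nat -> V,
    (forall e : R, 0 < e -> exists N : nat, forall m n, (N <= m)%N -> (N <= n)%N ->
        ipnorm ip (u m - u n) < e) ->
    exists l : V, forall e : R, 0 < e -> exists N : nat, forall n, (N <= n)%N ->
        ipnorm ip (u n - l) < e.

Definition is_hilbert (ip : V -> V -> C) : Prop :=
  is_inner_product ip /\ ip_complete ip.

Definition bounded_op (ip : V -> V -> C) (T : V -> V) : Prop :=
  (forall (a : C) (x y : V), T (a *: x + y) = a *: T x + T y) /\
  exists M : R, forall x : V, ipnorm ip (T x) <= M * ipnorm ip x.

Definition positive_op (ip : V -> V -> C) (A : V -> V) : Prop :=
  bounded_op ip A /\ forall x : V, 0 <= ip (A x) x.

(** S in B_A(H): S in B(H) and there is R in B(H) with A R = S^* A,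
    i.e. <A R x, y> = <A x, S y> for all x, y. *)
Definition in_BA (ip : V -> V -> C) (A S : V -> V) : Prop :=
  bounded_op ip S /\
  exists Rop : V -> V, bounded_op ip Rop /\
    forall x y : V, ip (A (Rop x)) y = ip (A x) (S y).

Definition ipA (ip : V -> V -> C) (A : V -> V) (x z : V) : C := ip (A x) z.

Definition normA (ip : V -> V -> C) (A : V -> V) (z : V) : R :=
  Num.sqrt (complex.Re (ip (A z) z)).

Definition cmod (z : C) : R := Normc.normc z.

Definition A_unit (ip : V -> V -> C) (A : V -> V) : set V :=
  [set z | normA ip A z = 1].

Definition opnormA ip A (T : V -> V) : R :=
  sup [set r | exists2 z, A_unit ip A z & r = normA ip A (T z)].

Definition mA ip A (T : V -> V) : R :=
  inf [set r | exists2 z, A_unit ip A z & r = normA ip A (T z)].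

Definition omegaA ip A (T : V -> V) : R :=
  sup [set r | exists2 z, A_unit ip A z & r = cmod (ipA ip A (T z) z)].

Definition cA ip A (T : V -> V) : R :=
  inf [set r | exists2 z, A_unit ip A z & r = cmod (ipA ip A (T z) z)].

Definition domegaA ip A (T : V -> V) : R :=
  sup [set r | exists2 z, A_unit ip A z &
        r = Num.sqrt (cmod (ipA ip A (T z) z) ^+ 2 + normA ip A (T z) ^+ 4)].

End Hilbert.

From HB Require Import structures.
From mathcomp Require Import all_boot all_order all_algebra.
From mathcomp Require Import complex.
From mathcomp Require Import boolp classical_sets reals.
From mathcomp Require Import ring lra.
Import Order.TTheory GRing.Theory Num.Theory.
Local Open Scope ring_scope.
Set Implicit Arguments. Unset Strict Implicit. Unset Printing Implicit Defensive.

(* Cauchy-Schwarz for the semi-inner product <x, z>_A gives |<Sz, z>_A| <= ||Sz||_A on the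
   A-unit sphere, and with m <= ||Sz||_A and c <= |<Sz, z>_A| both bounds become pointwise:
     (1 + m^2) |<Sz, z>_A|^2 <= |<Sz, z>_A|^2 + ||Sz||_A^4,
     c^2 (1 + ||Sz||_A^2)    <= |<Sz, z>_A|^2 + ||Sz||_A^4,
   which pass to the suprema.  This needs those suprema to be finite (sup of an unbounded set
   is 0 in the library), i.e. S must be A-bounded.  With R a bounded operator such that
   A R = S^* A, the operator T = R S is A-symmetric, so v_n = ||T^n z||_A is log-convex
   (v_(n+1)^2 = <T^(n+2) z, T^n z>_A <= v_n v_(n+2)); it grows at most like ||T||^n in the
   Hilbert norm, which forces v_1 <= ||T|| v_0.  Hence ||Sz||_A^2 = <Tz, z>_A <= ||T||. *)

Section ComplexModulus.
Variable R : realType.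
Implicit Types z : complex R.

Lemma normcC z : `|z| = real_complex R (cmod z).
Proof. by case: z => a b; rewrite normc_def. Qed.

Lemma cmod_ge0 z : 0 <= cmod z.
Proof. by case: z => a b; exact: sqrtr_ge0. Qed.

Lemma Re_le_cmod z : complex.Re z <= cmod z.
Proof.
by rewrite -lecR -normcC; apply: le_trans (normc_ge_Re z); rewrite lecR ler_norm.
Qed.

End ComplexModulus.

Section SemiInnerProduct.
Variables (R : realType) (V : lmodType (complex R)) (F : V -> V -> complex R).
Hypothesis F_linear : forall a x y z, F (a *: x + y) z = a * F x z + F y z.
Hypothesis F_antilinear : forall a x y z, F z (a *: x + y) = a^* * F z x + F z y.
Hypothesis F_ge0 : forall x, 0 <= F x x.

Lemma form0l z : F 0 z = 0.
Proof.
by have := F_linear 1 0 0 z; rewrite scale1r addr0 mul1r -{1}[F 0 z]addr0 => /addrI/esym.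
Qed.

Lemma form0r z : F z 0 = 0.
Proof.
have := F_antilinear 1 0 0 z.
by rewrite scale1r addr0 rmorph1 mul1r -{1}[F z 0]addr0 => /addrI/esym.
Qed.

Lemma formDl x y z : F (x + y) z = F x z + F y z.
Proof. by rewrite -[x]scale1r F_linear mul1r scale1r. Qed.

Lemma formDr x y z : F z (x + y) = F z x + F z y.
Proof. by rewrite -[x]scale1r F_antilinear rmorph1 mul1r scale1r. Qed.

Lemma formZl a x z : F (a *: x) z = a * F x z.
Proof. by rewrite -[a *: x]addr0 F_linear form0l addr0. Qed.

Lemma formZr a x z : F z (a *: x) = a^* * F z x.
Proof. by rewrite -[a *: x]addr0 F_antilinear form0r addr0. Qed.

Lemma formNl x z : F (- x) z = - F x z.
Proof. by rewrite -scaleN1r formZl mulN1r. Qed.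

Lemma formNr x z : F z (- x) = - F z x.
Proof. by rewrite -scaleN1r formZr rmorphN1 mulN1r. Qed.

Lemma formC x y : F y x = (F x y)^*.
Proof.
have realF w : (F w w)^* = F w w by exact: geC0_conj.
have ii : 'i * 'i = -1 :> complex R by rewrite -expr2 sqrCi.
have polar1 : F x y + F y x = F (x + y) (x + y) - F x x - F y y.
  by rewrite !(formDl, formDr); ring.
have polari : 'i * (F y x - F x y) = F (x + 'i *: y) (x + 'i *: y) - F x x - F y y.
  rewrite !(formDl, formDr, formZl, formZr) conjCi.
  by rewrite !mulNr mulrN mulrA ii; ring.
have c1 : (F x y)^* + (F y x)^* = F x y + F y x.
  by rewrite -rmorphD polar1 !rmorphB /= !realF.
have c2 : (F x y)^* - (F y x)^* = F y x - F x y.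
  have e : ('i * (F y x - F x y))^* = 'i * (F y x - F x y).
    by rewrite {}polari !rmorphB /= !realF.
  rewrite rmorphM rmorphB /= conjCi in e.
  by apply: (@mulfI _ 'i); [exact: neq0Ci | rewrite -e; ring].
have two : 2 != 0 :> complex R by rewrite pnatr_eq0.
apply: (mulfI two); transitivity ((F x y + F y x) + (F y x - F x y)); first ring.
by rewrite -c1 -c2; ring.
Qed.

Lemma form_expand x y s : F (x - s *: y) (x - s *: y) =
  F x x - s^* * F x y - s * (F x y)^* + s * s^* * F y y.
Proof. by rewrite !(formDl, formDr, formNl, formNr, formZl, formZr) -(formC x y); ring. Qed.

Lemma form_CauchySchwarz_pos x y : 0 < F y y -> `|F x y| ^+ 2 <= F x x * F y y.
Proof.
move=> Fyy_gt0; have Fyy_neq0 : F y y != 0 by rewrite gt_eqF.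
have := F_ge0 (x - (F x y / F y y) *: y).
rewrite form_expand fmorph_div /= (geC0_conj (F_ge0 y)) => h.
rewrite normCK -subr_ge0.
have -> : F x x * F y y - F x y * (F x y)^* = F y y *
  (F x x - (F x y)^* / F y y * F x y - F x y / F y y * (F x y)^*
   + F x y / F y y * ((F x y)^* / F y y) * F y y) by field.
exact: mulr_ge0 (ltW Fyy_gt0) h.
Qed.

Lemma form_CauchySchwarz x y : `|F x y| ^+ 2 <= F x x * F y y.
Proof.
have [Fyy0|Fyy_neq0] := eqVneq (F y y) 0; last first.
  by apply: form_CauchySchwarz_pos; rewrite lt_def Fyy_neq0 F_ge0.
have [Fxx0|Fxx_neq0] := eqVneq (F x x) 0; last first.
  rewrite mulrC -norm_conjC -formC.
  by apply: form_CauchySchwarz_pos; rewrite lt_def Fxx_neq0 F_ge0.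
have := F_ge0 (x - F x y *: y).
rewrite form_expand Fxx0 Fyy0 mulr0 addr0 sub0r normCK mulr0.
rewrite [(F x y)^* * _]mulrC -opprD oppr_ge0 => h.
by apply: le_trans h; rewrite lerDl mul_conjC_ge0.
Qed.

Lemma form_Re_ge0 x : 0 <= complex.Re (F x x).
Proof. by have := F_ge0 x; rewrite lecE => /andP[]. Qed.

Lemma form_diag_real x : real_complex R (complex.Re (F x x)) = F x x.
Proof. by have := F_ge0 x; case: (F x x) => a b; rewrite lecE /= => /andP[/eqP ->]. Qed.

Lemma ipnorm_sqr x : ipnorm F x ^+ 2 = complex.Re (F x x).
Proof. exact/sqr_sqrtr/form_Re_ge0. Qed.

Lemma cmod_form_le x y : cmod (F x y) <= ipnorm F x * ipnorm F y.
Proof.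
have := form_CauchySchwarz x y.
rewrite normcC -(form_diag_real x) -(form_diag_real y) -rmorphXn -rmorphM lecR => h.
rewrite /ipnorm -sqrtrM ?form_Re_ge0 // -(ger0_norm (cmod_ge0 (F x y))) -sqrtr_sqr.
exact: ler_wsqrtr.
Qed.

End SemiInnerProduct.

Section LogConvexSequences.
Variable R : archiFieldType.

Lemma bernoulli_le (r : R) n : 1 <= r -> 1 + n%:R * (r - 1) <= r ^+ n.
Proof.
move=> r_ge1; elim: n => [|n IHn]; first by rewrite mul0r addr0 expr0.
rewrite exprS -natr1.
have : 0 <= r * (r ^+ n - (1 + n%:R * (r - 1))) by apply: mulr_ge0; lra.
have : 0 <= n%:R * (r - 1) ^+ 2 by apply: mulr_ge0; [exact: ler0n | exact: sqr_ge0].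
nra.
Qed.

Lemma expr_bounded_le1 (r K : R) : (forall n, r ^+ n <= K) -> r <= 1.
Proof.
move=> rK; rewrite leNgt; apply/negP => r_gt1.
have K_ge1 : 1 <= K by rewrite -(expr0 r) rK.
have s_gt0 : 0 < r - 1 by rewrite subr_gt0.
have := archi_boundP (divr_ge0 (le_trans ler01 K_ge1) (ltW s_gt0)).
set N := Num.Def.archi_bound _; rewrite ltr_pdivrMr // => KN.
have := le_trans (bernoulli_le N (ltW r_gt1)) (rK N); lra.
Qed.

Lemma logconvex_expr_le (v : nat -> R) :
  v 0%N = 1 -> 0 < v 1%N -> (forall k, v k.+1 ^+ 2 <= v k * v k.+2) ->
  forall n, v 1%N ^+ n <= v n.
Proof.
move=> v0 v1_gt0 lc n.
suff [] : v 1%N * v n <= v n.+1 /\ v 1%N ^+ n <= v n by [].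
elim: n => [|n [ratio IHn]]; first by rewrite v0 mulr1 expr0.
have vn_gt0 : 0 < v n := lt_le_trans (exprn_gt0 _ v1_gt0) IHn.
split; last by rewrite exprS; apply: le_trans ratio; rewrite ler_pM2l.
have vSn_ge0 : 0 <= v n.+1 by apply: le_trans ratio; rewrite mulr_ge0 ?ltW.
rewrite -(ler_pM2l vn_gt0); apply: le_trans (lc n).
by rewrite mulrCA expr2 mulrA ler_wpM2r.
Qed.

Lemma logconvex_le_geometric (v : nat -> R) (K M : R) :
  v 0%N = 1 -> (forall k, v k.+1 ^+ 2 <= v k * v k.+2) -> 0 < M ->
  (forall n, v n ^+ 2 <= K * (M ^+ n) ^+ 2) -> v 1%N <= M.
Proof.
move=> v0 lc M_gt0 vK; rewrite leNgt; apply/negP => M_lt_v1.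
have v1_gt0 : 0 < v 1%N := lt_trans M_gt0 M_lt_v1.
suff : (v 1%N / M) ^+ 2 <= 1.
  have ratio_ge0 : 0 <= v 1%N / M by rewrite divr_ge0 ?ltW.
  by rewrite expr_le1 // ler_pdivrMr // mul1r leNgt M_lt_v1.
apply: (@expr_bounded_le1 _ K) => n.
rewrite -exprM mulnC exprM expr_div_n expr_div_n ler_pdivrMr ?exprn_gt0 //.
have v1n_ge0 : 0 <= v 1%N ^+ n by rewrite exprn_ge0 ?ltW.
have vn_ge := logconvex_expr_le v0 v1_gt0 lc n.
by apply: le_trans _ (vK n); rewrite ler_sqr ?nnegrE // (le_trans v1n_ge0).
Qed.

End LogConvexSequences.

Section SupInfOfImages.
Local Open Scope classical_set_scope.
Variables (R : realType) (T : Type) (U : set T).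
Local Notation img f := [set r : R | exists2 z, U z & r = f z].

Lemma img_set0 (f : T -> R) : ~ (exists z, U z) -> img f = set0.
Proof. by move=> U0; apply/seteqP; split=> // r [z Uz _]; apply: U0; exists z. Qed.

Lemma inf_img_ge0 (f : T -> R) : (forall z, U z -> 0 <= f z) -> 0 <= inf (img f).
Proof.
move=> f_ge0; have [[z Uz]|U0] := pselect (exists z, U z).
  by apply: lb_le_inf => [|_ [y Uy ->]]; [exists (f z), z | exact: f_ge0].
by rewrite (img_set0 f U0) inf0.
Qed.

Lemma inf_img_le (f : T -> R) z : (forall z, U z -> 0 <= f z) -> U z -> inf (img f) <= f z.
Proof. by move=> f_ge0 Uz; apply: ge_inf; [exists 0 => _ [y Uy ->]; exact: f_ge0 | exists z]. Qed.

Lemma le_sqr_sup_img_sqrt (g : T -> R) (N : R) z :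
  (forall z, U z -> 0 <= g z) -> (forall z, U z -> g z <= N) -> U z ->
  g z <= sup (img (fun z => Num.sqrt (g z))) ^+ 2.
Proof.
move=> g_ge0 gN Uz.
have le_sup : Num.sqrt (g z) <= sup (img (fun z => Num.sqrt (g z))).
  apply: ub_le_sup; last by exists z.
  by exists (Num.sqrt N) => _ [y Uy ->]; rewrite ler_wsqrtr ?gN.
rewrite -{1}(sqr_sqrtr (g_ge0 z Uz)) ler_sqr ?nnegrE ?sqrtr_ge0 //.
exact: le_trans (sqrtr_ge0 _) le_sup.
Qed.

Lemma sup_img_sqr_le (f : T -> R) (a b D : R) z0 :
  U z0 -> (forall z, U z -> 0 <= f z) -> 0 <= a ->
  (forall z, U z -> b + a * f z ^+ 2 <= D) -> b + a * sup (img f) ^+ 2 <= D.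
Proof.
move=> Uz0 f_ge0 a_ge0 fD; have [a0 | a_neq0] := eqVneq a 0.
  by have := fD z0 Uz0; rewrite a0 !mul0r.
have a_gt0 : 0 < a by rewrite lt_def a_neq0.
pose t := (D - b) / a.
have ft z : U z -> f z ^+ 2 <= t by move=> Uz; rewrite ler_pdivlMr // mulrC lerBrDl fD.
have t_ge0 : 0 <= t := le_trans (sqr_ge0 _) (ft z0 Uz0).
have f_le z : U z -> f z <= Num.sqrt t.
  by move=> Uz; rewrite -(ger0_norm (f_ge0 z Uz)) -sqrtr_sqr ler_wsqrtr ?ft.
have sup_le : sup (img f) <= Num.sqrt t.
  by apply: ge_sup => [|_ [z Uz ->]]; [exists (f z0), z0 | exact: f_le].
have sup_ge0 : 0 <= sup (img f).
  apply: le_trans (f_ge0 z0 Uz0) _; apply: ub_le_sup; last by exists z0.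
  by exists (Num.sqrt t) => _ [z Uz ->]; exact: f_le.
have : sup (img f) ^+ 2 <= t by rewrite -(sqr_sqrtr t_ge0) ler_sqr ?nnegrE ?sqrtr_ge0.
by rewrite ler_pdivlMr // mulrC lerBrDl.
Qed.

Lemma max_inf_sup_sqr_le (p q : T -> R) (M : R) :
  (forall z, U z -> 0 <= p z) -> (forall z, U z -> p z <= q z) ->
  (forall z, U z -> q z <= M) ->
  Num.max ((1 + inf (img q) ^+ 2) * sup (img p) ^+ 2)
          ((1 + sup (img q) ^+ 2) * inf (img p) ^+ 2)
  <= sup (img (fun z => Num.sqrt (p z ^+ 2 + q z ^+ 4))) ^+ 2.
Proof.
move=> p_ge0 pq qM; have [[z0 Uz0]|U0] := pselect (exists z, U z); last first.
  by rewrite !img_set0 // sup0 inf0 expr0n mulr0 maxxx.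
have q_ge0 z : U z -> 0 <= q z by move=> Uz; exact: le_trans (p_ge0 z Uz) (pq z Uz).
have sqr_le (a b : R) : 0 <= a -> a <= b -> a ^+ 2 <= b ^+ 2.
  by move=> a_ge0 ab; rewrite ler_sqr ?nnegrE // (le_trans a_ge0).
have qqE z : q z ^+ 4 = q z ^+ 2 * q z ^+ 2 by rewrite -exprD.
set d := sup (img (fun z => Num.sqrt (p z ^+ 2 + q z ^+ 4))).
have d_ge z : U z -> p z ^+ 2 + q z ^+ 4 <= d ^+ 2.
  rewrite /d; apply: (@le_sqr_sup_img_sqrt (fun z => p z ^+ 2 + q z ^+ 4)
    (M ^+ 2 + M ^+ 4)).
    by move=> y Uy; rewrite addr_ge0 ?exprn_ge0 ?p_ge0 ?q_ge0.
  move=> y Uy; have pM := le_trans (pq y Uy) (qM y Uy).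
  by rewrite lerD // lerXn2r ?nnegrE ?p_ge0 ?q_ge0 ?qM // (le_trans (p_ge0 y Uy)).
rewrite ge_max; apply/andP; split.
  rewrite -[X in X <= _]add0r; apply: (sup_img_sqr_le Uz0 p_ge0).
    by rewrite addr_ge0 ?sqr_ge0.
  move=> z Uz; apply: le_trans (d_ge z Uz); rewrite add0r mulrDl mul1r qqE lerD2l.
  by apply: ler_pM; rewrite ?sqr_ge0 // sqr_le ?inf_img_ge0 ?inf_img_le ?p_ge0 ?pq.
rewrite mulrDl mul1r [_ * inf _ ^+ 2]mulrC.
apply: (sup_img_sqr_le Uz0 q_ge0); first exact: sqr_ge0.
move=> z Uz; apply: le_trans (d_ge z Uz); rewrite qqE.
have c_le_p : inf (img p) <= p z by rewrite inf_img_le.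
have c_ge0 : 0 <= inf (img p) by rewrite inf_img_ge0.
apply: lerD; first exact: sqr_le.
by apply: ler_pM; rewrite ?sqr_ge0 // sqr_le // (le_trans c_le_p) ?pq.
Qed.

End SupInfOfImages.

Lemma iter_le_expr (V : Type) (R : numDomainType) (T : V -> V) (N : V -> R) (M : R) :
  0 <= M -> (forall x, N (T x) <= M * N x) -> forall n x, N (iter n T x) <= M ^+ n * N x.
Proof.
move=> M_ge0 TM; elim=> [|n IHn] x /=; first by rewrite expr0 mul1r.
by apply: le_trans (TM _) _; rewrite exprS -mulrA ler_wpM2l.
Qed.

Lemma bounded_op_bound (R : realType) (V : lmodType (complex R))
    (ip : V -> V -> complex R) (T : V -> V) :
  bounded_op ip T -> exists2 M, 0 < M & forall x, ipnorm ip (T x) <= M * ipnorm ip x.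
Proof.
case=> _ [M TM]; exists (Num.max 1 M) => [|x]; first by rewrite lt_max ltr01.
by apply: le_trans (TM x) _; rewrite ler_wpM2r ?sqrtr_ge0 // le_max lexx orbT.
Qed.

Section BAOperators.
Variables (R : realType) (V : lmodType (complex R)) (ip : V -> V -> complex R).
Variables (A S Rop : V -> V).
Hypothesis ip_inner : is_inner_product ip.
Hypothesis A_pos : positive_op ip A.
Hypothesis S_bounded : bounded_op ip S.
Hypothesis Rop_bounded : bounded_op ip Rop.
Hypothesis RopS : forall x y, ip (A (Rop x)) y = ip (A x) (S y).

Let ip_linear a x y z : ip (a *: x + y) z = a * ip x z + ip y z.
Proof. by case: ip_inner. Qed.

Let ip_antilinear a x y z : ip z (a *: x + y) = a^* * ip z x + ip z y.
Proof. by case: ip_inner => lin herm _ _; rewrite herm lin rmorphD rmorphM /= -!herm. Qed.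

Let ip_ge0 x : 0 <= ip x x.
Proof. by case: ip_inner. Qed.

Let ipA_linear a x y z : ipA ip A (a *: x + y) z = a * ipA ip A x z + ipA ip A y z.
Proof. by case: A_pos => [[A_linear _] _]; rewrite /ipA A_linear ip_linear. Qed.

Let ipA_antilinear a x y z : ipA ip A z (a *: x + y) = a^* * ipA ip A z x + ipA ip A z y.
Proof. exact: ip_antilinear. Qed.

Let ipA_ge0 x : 0 <= ipA ip A x x.
Proof. exact: A_pos.2. Qed.

Lemma cmod_ipA_le x y : cmod (ipA ip A x y) <= normA ip A x * normA ip A y.
Proof. exact: cmod_form_le ipA_linear ipA_antilinear ipA_ge0 x y. Qed.

Lemma normA_sqr x : normA ip A x ^+ 2 = complex.Re (ipA ip A x x).
Proof. exact: ipnorm_sqr ipA_ge0 x. Qed.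

Lemma normA_le_ipnorm : exists2 K, 0 < K & forall x, normA ip A x ^+ 2 <= K * ipnorm ip x ^+ 2.
Proof.
have [K K_gt0 AK] := bounded_op_bound A_pos.1; exists K => // x.
rewrite normA_sqr; apply: le_trans (Re_le_cmod _) _.
apply: le_trans (cmod_form_le ip_linear ip_antilinear ip_ge0 (A x) x) _.
by rewrite expr2 mulrA ler_wpM2r ?sqrtr_ge0.
Qed.

Lemma ipA_RopS_sym x y : ipA ip A (Rop (S x)) y = ipA ip A x (Rop (S y)).
Proof.
rewrite (formC ipA_linear ipA_antilinear ipA_ge0 (Rop (S y))) /ipA !RopS.
exact: formC ipA_linear ipA_antilinear ipA_ge0 (S y) (S x).
Qed.

Lemma normA_RopS_sqr_le u :
  normA ip A (Rop (S u)) ^+ 2 <= normA ip A u * normA ip A (Rop (S (Rop (S u)))).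
Proof.
rewrite normA_sqr ipA_RopS_sym; apply: le_trans (Re_le_cmod _) _.
exact: cmod_ipA_le.
Qed.

Lemma normA_RopS_le : exists M, forall z, normA ip A z = 1 -> normA ip A (Rop (S z)) <= M.
Proof.
have [MS MS_gt0 SM] := bounded_op_bound S_bounded.
have [MR MR_gt0 RM] := bounded_op_bound Rop_bounded.
have [K K_gt0 AK] := normA_le_ipnorm.
pose T := Rop \o S.
have TM x : ipnorm ip (T x) <= MR * MS * ipnorm ip x.
  by apply: le_trans (RM _) _; rewrite -mulrA ler_pM2l.
exists (MR * MS) => z z1.
apply: (@logconvex_le_geometric _ (fun n => normA ip A (iter n T z)) (K * ipnorm ip z ^+ 2)).
- exact: z1.
- by move=> k; exact: normA_RopS_sqr_le.
- exact: mulr_gt0.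
move=> n; apply: le_trans (AK _) _; rewrite -mulrA ler_pM2l // -exprMn mulrC.
have M_ge0 : 0 <= MR * MS by rewrite mulr_ge0 // ltW.
apply: lerXn2r; rewrite ?nnegrE ?mulr_ge0 ?exprn_ge0 ?sqrtr_ge0 //.
exact: iter_le_expr M_ge0 TM n z.
Qed.

Lemma normA_S_bounded : exists M, forall z, normA ip A z = 1 -> normA ip A (S z) ^+ 2 <= M.
Proof.
have [M RopS_M] := normA_RopS_le; exists M => z z1.
rewrite normA_sqr /ipA -RopS -/(ipA ip A (Rop (S z)) z).
apply: le_trans (Re_le_cmod _) _; apply: le_trans (cmod_ipA_le _ _) _.
by rewrite z1 mulr1 RopS_M.
Qed.

End BAOperators.

Unset Implicit Arguments.

Theorem theorem2p29 (R : realType) (V : lmodType (complex R))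
  (ip : V -> V -> complex R) (A S : V -> V) :
  is_hilbert ip ->
  positive_op ip A ->
  in_BA ip A S ->
  Num.max ((1 + mA ip A S ^+ 2) * omegaA ip A S ^+ 2)
          ((1 + opnormA ip A S ^+ 2) * cA ip A S ^+ 2)
  <= domegaA ip A S ^+ 2.
Proof.
move=> [ip_inner _] A_pos [S_bounded [Rop [Rop_bounded RopS]]].
have [M SM] := normA_S_bounded ip_inner A_pos S_bounded Rop_bounded RopS.
apply: (@max_inf_sup_sqr_le _ _ (A_unit ip A) (fun z => cmod (ipA ip A (S z) z))
  (fun z => normA ip A (S z)) (Num.sqrt M)) => z z1.
- exact: cmod_ge0.
- by have := cmod_ipA_le ip_inner A_pos (S z) z; rewrite z1 mulr1.
- have M_ge0 : 0 <= M := le_trans (sqr_ge0 _) (SM z z1).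
  by rewrite -ler_sqr ?nnegrE ?sqrtr_ge0 // (sqr_sqrtr M_ge0) SM.
Qed.
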